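(* Let $R$ be an idempotent semiring and let $A,B$ be irreducible $R$-algebras such that the structure maps $R\to A$ and $R\to B$ have trivial kernel (the preimage of $0$ is $\{0\}$; this is automatic if $R$ is a semifield). Then $A\otimes_RB$ is irreducible.
   Context: Semirings are commutative with $1\neq0$; idempotent means $a+a=a$ for all $a$. A semiring is irreducible if whenever $xy$ is nilpotent, $x$ or $y$ is nilpotent. $A\otimes_RB$ is the tensor product of $R$-algebras (the coproduct in the category of $R$-algebras). *)

From HB Require Import structures.
From mathcomp Require Import all_boot all_algebra.
Set Implicit Arguments. Unset Strict Implicit. Unset Printing Implicit Defensive.
Import GRing.Theory.
Local Open Scope ring_scope.

Definition idempotent_semiring (R : pzSemiRingType) : Prop :=
  forall a : R, a + a = a.

Definition nilp (S : pzSemiRingType) (x : S) : Prop :=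
  exists n : nat, x ^+ n = 0.

Definition irreducible_semiring (S : comPzSemiRingType) : Prop :=
  forall x y : S, nilp (x * y) -> nilp x \/ nilp y.

Definition trivial_kernel (R S : pzSemiRingType) (f : {rmorphism R -> S}) : Prop :=
  forall r : R, f r = 0 -> r = 0.

(* (C, fC, iA, iB) is a tensor product A (x)_R B, i.e. a coproduct of the
   R-algebras (A, fA) and (B, fB) in the category of commutative R-algebras
   (commutative semirings, possibly trivial, under R). *)
Definition is_tensor_product (R A B C : comPzSemiRingType)
  (fA : {rmorphism R -> A}) (fB : {rmorphism R -> B}) (fC : {rmorphism R -> C})
  (iA : {rmorphism A -> C}) (iB : {rmorphism B -> C}) : Prop :=
  (forall r, iA (fA r) = fC r) /\ (forall r, iB (fB r) = fC r) /\
  forall (D : comPzSemiRingType) (fD : {rmorphism R -> D})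
         (gA : {rmorphism A -> D}) (gB : {rmorphism B -> D}),
    (forall r, gA (fA r) = fD r) -> (forall r, gB (fB r) = fD r) ->
    (exists h : {rmorphism C -> D},
        (forall a, h (iA a) = gA a) /\ (forall b, h (iB b) = gB b)
        /\ (forall r, h (fC r) = fD r)) /\
    (forall h h' : {rmorphism C -> D},
        (forall a, h (iA a) = gA a) -> (forall b, h (iB b) = gB b) ->
        (forall a, h' (iA a) = gA a) -> (forall b, h' (iB b) = gB b) ->
        forall c, h c = h' c).

(* In an idempotent semiring the nilpotent elements are closed under sums and
   downward closed ([x + y] nilpotent forces [x] nilpotent).  Hence, for an
   irreducible idempotent [A], "x is not nilpotent" is a semiring morphism from
   [A] to the Boolean semiring.  Trivial kernels make the morphisms for [A] and
   [B] agree on [R], so they induce [h : A (x)_R B -> bool].  By the universal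
   property, applied to the subsemiring of sums of pure tensors, every element
   of [A (x)_R B] is such a sum; as [h (a (x) b) = false] forces [a] or [b] to
   be nilpotent, [h] vanishes exactly on the nilpotents, and irreducibility
   follows from [h (x * y) = h x && h y]. *)

From Pilot Require Import Defs.
From HB Require Import structures.
From mathcomp Require Import all_boot all_algebra.
From mathcomp Require Import boolp.
Import Pilot.Defs.
Set Implicit Arguments. Unset Strict Implicit. Unset Printing Implicit Defensive.
Import GRing.Theory.
Local Open Scope ring_scope.

Definition boolean_semiring : Type := bool.
HB.instance Definition _ := Choice.on boolean_semiring.
HB.instance Definition _ := GRing.isNmodule.Build boolean_semiring
  (orbA : associative (orb : boolean_semiring -> _ -> _)) orbC orFb.
Fact boolean_semiring_mulDl :
  left_distributive (andb : boolean_semiring -> _ -> _) +%R.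
Proof. by do 3!case. Qed.
HB.instance Definition _ := GRing.Nmodule_isComPzSemiRing.Build boolean_semiring
  (andbA : associative (andb : boolean_semiring -> _ -> _)) andbC andTb
  boolean_semiring_mulDl andFb.

Lemma boolean_semiring_addE (u v : boolean_semiring) : u + v = u || v.
Proof. by []. Qed.

Lemma boolean_semiring_mulE (u v : boolean_semiring) : u * v = u && v.
Proof. by []. Qed.

Lemma nilp_boolean_semiring (u : boolean_semiring) : nilp u -> u = false.
Proof. by case: u => // -[n]; rewrite expr1n. Qed.

Lemma idempotent_semiring_rmorph (R S : pzSemiRingType) (f : {rmorphism R -> S}) :
  idempotent_semiring R -> idempotent_semiring S.
Proof.
move=> idemR x; rewrite -{1 2 3}(mulr1 x) -mulrDr -(rmorph1 f) -rmorphD idemR.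
by rewrite rmorph1.
Qed.

Lemma nilp_rmorph (R S : pzSemiRingType) (f : {rmorphism R -> S}) (x : R) :
  nilp x -> nilp (f x).
Proof. by case=> n xn0; exists n; rewrite -rmorphXn xn0 rmorph0. Qed.

Lemma nilp_trivial_kernel (R S : pzSemiRingType) (f : {rmorphism R -> S}) (r : R) :
  trivial_kernel f -> nilp (f r) <-> nilp r.
Proof.
move=> kerf; split; last exact: nilp_rmorph.
by case=> n; rewrite -rmorphXn => /kerf rn0; exists n.
Qed.

Section Nilpotents.
Variable S : comPzSemiRingType.

Lemma nilp0 : nilp (0 : S). Proof. by exists 1%N; rewrite expr1. Qed.

Lemma nilpMr (x y : S) : nilp x -> nilp (x * y).
Proof. by case=> n xn0; exists n; rewrite exprMn xn0 mul0r. Qed.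

Lemma nilpMl (x y : S) : nilp y -> nilp (x * y).
Proof. by rewrite mulrC; apply: nilpMr. Qed.

Lemma nilpD (x y : S) : nilp x -> nilp y -> nilp (x + y).
Proof.
case=> m xm0 [n yn0]; exists (m + n)%N; rewrite exprDn big1 // => -[i /= _] _.
have [lt_in | le_ni] := ltnP i n.
  by rewrite -addnBA ?(ltnW lt_in) // exprD xm0 !mul0r mul0rn.
by rewrite -(subnKC le_ni) exprD yn0 mul0r mulr0 mul0rn.
Qed.

Hypothesis idemS : idempotent_semiring S.

Lemma exprD_absorb (x y : S) n : x ^+ n + (x + y) ^+ n = (x + y) ^+ n.
Proof.
elim: n => [|n IHn]; first by rewrite !expr0 idemS.
have -> : (x + y) ^+ n.+1 = (x + y) * (x ^+ n + (x + y) ^+ n) by rewrite IHn exprS.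
by rewrite exprS !mulrDr !mulrDl !addrA idemS.
Qed.

Lemma nilpDl (x y : S) : nilp (x + y) -> nilp x.
Proof. by case=> n xyn0; exists n; rewrite -(addr0 (x ^+ n)) -xyn0 exprD_absorb. Qed.

Lemma nilpDr (x y : S) : nilp (x + y) -> nilp y.
Proof. by rewrite addrC; apply: nilpDl. Qed.

End Nilpotents.

(* The two hypotheses are phantom arguments, so that the morphism instances
   below, whose proofs need them, can be attached to [non_nilp]. *)
Definition non_nilp (S : comNzSemiRingType)
  of idempotent_semiring S & irreducible_semiring S :=
  fun x : S => ~~ `[< nilp x >] : boolean_semiring.

Section NonNilpotence.
Variable S : comNzSemiRingType.
Hypotheses (idemS : idempotent_semiring S) (irrS : irreducible_semiring S).
Local Notation non_nilp := (non_nilp idemS irrS).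

Lemma non_nilpPn (x : S) : non_nilp x = false <-> nilp x.
Proof. by rewrite /non_nilp; case: asboolP. Qed.

Fact non_nilp_is_nmod_morphism : nmod_morphism non_nilp.
Proof.
split; first exact/non_nilpPn/nilp0.
move=> x y; rewrite boolean_semiring_addE /non_nilp -negb_and; congr (~~ _).
apply/asboolP/andP => [xy_nil | [/asboolP x_nil /asboolP y_nil]].
  by split; apply/asboolP; [apply: nilpDl xy_nil | apply: nilpDr xy_nil].
exact: nilpD.
Qed.

HB.instance Definition _ :=
  GRing.isNmodMorphism.Build S boolean_semiring non_nilp non_nilp_is_nmod_morphism.

Fact non_nilp_is_monoid_morphism : monoid_morphism non_nilp.
Proof.
split.
  rewrite /non_nilp; case: asboolP => // -[n].
  by rewrite expr1n => /eqP; rewrite oner_eq0.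
move=> x y; rewrite boolean_semiring_mulE /non_nilp -negb_or; congr (~~ _).
apply/asboolP/orP => [/irrS [] nil_xy | [] /asboolP nil_xy].
- by left; apply/asboolP.
- by right; apply/asboolP.
- exact: nilpMr.
- exact: nilpMl.
Qed.

HB.instance Definition _ :=
  GRing.isMonoidMorphism.Build S boolean_semiring non_nilp non_nilp_is_monoid_morphism.

End NonNilpotence.

Section Corestriction.
Variables (R S : pzSemiRingType) (P : pred S) (U : subPzSemiRingType P).
Variables (f : {rmorphism R -> S}) (fP : forall x, P (f x)).

Definition corestr (x : R) : U := Sub (f x) (fP x).

Lemma val_corestr x : val (corestr x) = f x.
Proof. exact: SubK. Qed.

Fact corestr_is_nmod_morphism : nmod_morphism corestr.
Proof.
split=> [|x y]; apply: val_inj; first by rewrite val_corestr !rmorph0.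
by rewrite val_corestr !rmorphD -!val_corestr.
Qed.

HB.instance Definition _ :=
  GRing.isNmodMorphism.Build R U corestr corestr_is_nmod_morphism.

Fact corestr_is_monoid_morphism : monoid_morphism corestr.
Proof.
split=> [|x y]; apply: val_inj; first by rewrite val_corestr !rmorph1.
by rewrite val_corestr !rmorphM -!val_corestr.
Qed.

HB.instance Definition _ :=
  GRing.isMonoidMorphism.Build R U corestr corestr_is_monoid_morphism.

End Corestriction.

Section PureTensors.
Variables (A B C : comPzSemiRingType).
Variables (iA : {rmorphism A -> C}) (iB : {rmorphism B -> C}).

Definition sum_of_pure_tensors (c : C) : Prop :=
  forall P : C -> Prop, P 0 -> (forall x y, P x -> P y -> P (x + y)) ->
  (forall a b, P (iA a * iB b)) -> P c.

Lemma sum_of_pure_tensors0 : sum_of_pure_tensors 0.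
Proof. by move=> P. Qed.

Lemma sum_of_pure_tensorsD x y :
  sum_of_pure_tensors x -> sum_of_pure_tensors y -> sum_of_pure_tensors (x + y).
Proof. by move=> Sx Sy P P0 PD Pt; apply: PD (Sx P P0 PD Pt) (Sy P P0 PD Pt). Qed.

Lemma sum_of_pure_tensors_pure a b : sum_of_pure_tensors (iA a * iB b).
Proof. by move=> P. Qed.

Lemma sum_of_pure_tensors1 : sum_of_pure_tensors 1.
Proof.
by rewrite -(mulr1 1) -{1}(rmorph1 iA) -(rmorph1 iB); apply: sum_of_pure_tensors_pure.
Qed.

Lemma sum_of_pure_tensorsA a : sum_of_pure_tensors (iA a).
Proof. by rewrite -[iA a]mulr1 -(rmorph1 iB); apply: sum_of_pure_tensors_pure. Qed.

Lemma sum_of_pure_tensorsB b : sum_of_pure_tensors (iB b).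
Proof. by rewrite -[iB b]mul1r -(rmorph1 iA); apply: sum_of_pure_tensors_pure. Qed.

Lemma sum_of_pure_tensorsM x y :
  sum_of_pure_tensors x -> sum_of_pure_tensors y -> sum_of_pure_tensors (x * y).
Proof.
move=> Sx Sy; elim/Sx: _ => [|x1 x2 S1 S2|a b].
- by rewrite mul0r; apply: sum_of_pure_tensors0.
- by rewrite mulrDl; apply: sum_of_pure_tensorsD.
elim/Sy: _ => [|y1 y2 S1 S2|c d].
- by rewrite mulr0; apply: sum_of_pure_tensors0.
- by rewrite mulrDr; apply: sum_of_pure_tensorsD.
by rewrite mulrACA -!rmorphM; apply: sum_of_pure_tensors_pure.
Qed.

Definition pure_tensor_sums : pred C := fun c => `[< sum_of_pure_tensors c >].

Lemma pure_tensor_sumsP c : reflect (sum_of_pure_tensors c) (c \in pure_tensor_sums).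
Proof. exact: asboolP. Qed.

Fact pure_tensor_sums_semiring_closed : semiring_closed pure_tensor_sums.
Proof.
split; split.
- by apply/pure_tensor_sumsP; apply: sum_of_pure_tensors0.
- move=> x y /pure_tensor_sumsP Sx /pure_tensor_sumsP Sy.
  by apply/pure_tensor_sumsP; apply: sum_of_pure_tensorsD.
- by apply/pure_tensor_sumsP; apply: sum_of_pure_tensors1.
- move=> x y /pure_tensor_sumsP Sx /pure_tensor_sumsP Sy.
  by apply/pure_tensor_sumsP; apply: sum_of_pure_tensorsM.
Qed.

Definition pure_tensor_span := {c : C | pure_tensor_sums c}.
HB.instance Definition _ := [isSub of pure_tensor_span for sval].
HB.instance Definition _ := [Choice of pure_tensor_span by <:].
HB.instance Definition _ := GRing.SubChoice_isSubComPzSemiRing.Build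
  C pure_tensor_sums pure_tensor_span pure_tensor_sums_semiring_closed.

End PureTensors.

Lemma tensor_product_sum_of_pure_tensors (R A B C : comPzSemiRingType)
  (fA : {rmorphism R -> A}) (fB : {rmorphism R -> B}) (fC : {rmorphism R -> C})
  (iA : {rmorphism A -> C}) (iB : {rmorphism B -> C}) :
  is_tensor_product fA fB fC iA iB -> forall c, sum_of_pure_tensors iA iB c.
Proof.
move=> [iAfA [iBfB univ]] c.
have spanA a : pure_tensor_sums iA iB (iA a).
  by apply/pure_tensor_sumsP; apply: sum_of_pure_tensorsA.
have spanB b : pure_tensor_sums iA iB (iB b).
  by apply/pure_tensor_sumsP; apply: sum_of_pure_tensorsB.
pose jA := corestr (pure_tensor_span iA iB) spanA.
pose jB := corestr (pure_tensor_span iA iB) spanB.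
have jBfB r : jB (fB r) = (jA \o fA) r.
  by apply: val_inj; rewrite /= iAfA iBfB.
have [[h [hA [hB _]]] _] := univ _ (jA \o fA) jA jB (fun=> erefl) jBfB.
have [_ uniq] := univ C fC iA iB iAfA iBfB.
have -> : c = val (h c).
  by apply: (uniq idfun (val \o h)) => // x /=; rewrite ?hA ?hB.
exact/pure_tensor_sumsP/valP.
Qed.

Lemma non_nilp_trivial_kernel (R : pzSemiRingType) (S : comNzSemiRingType)
    (idemS : idempotent_semiring S) (irrS : irreducible_semiring S)
    (f : {rmorphism R -> S}) (r : R) :
  trivial_kernel f -> non_nilp idemS irrS (f r) = ~~ `[< nilp r >].
Proof.
by move=> kerf; rewrite /non_nilp (asbool_equiv_eq (nilp_trivial_kernel r kerf)).
Qed.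

Lemma irreducible_boolean_rmorph (C : comPzSemiRingType)
    (h : {rmorphism C -> boolean_semiring}) :
  (forall c, h c = false -> nilp c) -> irreducible_semiring C.
Proof.
move=> kerh x y /(nilp_rmorph h) /nilp_boolean_semiring.
rewrite rmorphM boolean_semiring_mulE => /negbT /nandP [] /negbTE /kerh.
- by left.
- by right.
Qed.

Lemma nilp_boolean_kernel_pure_tensors (A B C : comPzSemiRingType)
    (iA : {rmorphism A -> C}) (iB : {rmorphism B -> C})
    (h : {rmorphism C -> boolean_semiring}) :
  (forall a, h (iA a) = false -> nilp a) -> (forall b, h (iB b) = false -> nilp b) ->
  forall c, sum_of_pure_tensors iA iB c -> h c = false -> nilp c.
Proof.
move=> kerA kerB c Sc; elim/Sc: _ => [|x y IHx IHy|a b].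
- by move=> _; apply: nilp0.
- rewrite rmorphD boolean_semiring_addE => /negbT /norP [/negbTE/IHx + /negbTE/IHy].
  exact: nilpD.
rewrite rmorphM boolean_semiring_mulE => /negbT /nandP [] /negbTE.
- by move/kerA/(nilp_rmorph iA); apply: nilpMr.
- by move/kerB/(nilp_rmorph iB); apply: nilpMl.
Qed.

Theorem proposition5p10 (R A B : comNzSemiRingType)
  (fA : {rmorphism R -> A}) (fB : {rmorphism R -> B})
  (C : comPzSemiRingType) (fC : {rmorphism R -> C})
  (iA : {rmorphism A -> C}) (iB : {rmorphism B -> C}) :
  idempotent_semiring R ->
  irreducible_semiring A -> irreducible_semiring B ->
  trivial_kernel fA -> trivial_kernel fB ->
  is_tensor_product fA fB fC iA iB ->
  irreducible_semiring C.
Proof.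
move=> idemR irrA irrB kerA kerB tensor.
have idemA := idempotent_semiring_rmorph fA idemR.
have idemB := idempotent_semiring_rmorph fB idemR.
pose nA := non_nilp idemA irrA; pose nB := non_nilp idemB irrB.
have nBfB r : nB (fB r) = (nA \o fA) r.
  by rewrite /nA /nB /= !non_nilp_trivial_kernel.
have [_ [_ univ]] := tensor.
have [[h [h_iA [h_iB _]]] _] :=
  univ boolean_semiring (nA \o fA) nA nB (fun=> erefl) nBfB.
apply: (@irreducible_boolean_rmorph _ h) => c.
apply: nilp_boolean_kernel_pure_tensors (tensor_product_sum_of_pure_tensors tensor c).
- by move=> a; rewrite h_iA => /non_nilpPn.
- by move=> b; rewrite h_iB => /non_nilpPn.
Qed.
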